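(* Let $G$ be a finite simple graph with edge ideal $I=I(G)$, fix a total order $L_1>L_2>\dots>L_k$ on the minimal monomial generators (edges) of $I$, and for each $n\geq1$ let $L^{(n)}_1>L^{(n)}_2>\cdots$ be the minimal monomial generators of $I^n$ listed in the order described in the context. Then for every $n\geq1$, every $k'\geq 1$ and every $j\leq k'$: if $(L^{(n)}_j : L^{(n)}_{k'+1})$ is not contained in $(I^{n+1} : L^{(n)}_{k'+1})$, then there exists $i\leq k'$ such that $(L^{(n)}_i : L^{(n)}_{k'+1})$ is generated by a single variable and $(L^{(n)}_j : L^{(n)}_{k'+1})\subseteq (L^{(n)}_i : L^{(n)}_{k'+1})$.
   Context: $S=K[\,x : x\in V(G)\,]$ is the polynomial ring over a field $K$ on the vertices of $G$ and $I(G)=(xy : xy \text{ an edge of } G)$. For monomials $m,m'$, $(m:m')$ denotes the colon ideal $((m):(m'))$. Ordering: for $n\ge1$, every minimal monomial generator $M$ of $I^n$ can be written as $M=L_1^{a_1}\cdots L_k^{a_k}$ with $a_1+\dots+a_k=n$; its maximal expression is the lexicographically largest such exponent vector $(a_1,\dots,a_k)$ (lex: $(a)>_{\mathrm{lex}}(b)$ if at the first index where they differ, $a_i>b_i$). For minimal generators $M,N$ of $I^n$, $M>N$ iff the maximal expression of $M$ is lexicographically larger than that of $N$ (for $n=1$ this is the fixed order on the $L_i$). $L^{(n)}_1>L^{(n)}_2>\cdots$ is the list of all minimal monomial generators of $I^n$ in this decreasing order. *)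

From mathcomp Require Import all_boot all_algebra.
From mathcomp Require Import mpoly.
Set Implicit Arguments. Unset Strict Implicit. Unset Printing Implicit Defensive.
Import GRing.Theory.
Local Open Scope ring_scope.

Section EdgeIdeals.
Variables (K : fieldType) (d : nat).
Local Notation S := {mpoly K[d]}.

(* Ideals of S are represented by their membership predicates. *)

Definition genI (P : S -> Prop) (f : S) : Prop :=
  exists (gs : seq S) (cs : seq S),
    size cs = size gs /\ (forall g, g \in gs -> P g) /\
    f = \sum_(i < size gs) cs`_i * gs`_i.

Definition princ (m : S) : S -> Prop := genI (fun g => g = m).

Definition mulI (I J : S -> Prop) : S -> Prop :=
  genI (fun h => exists f g, I f /\ J g /\ h = f * g).

Fixpoint powI (I : S -> Prop) (n : nat) : S -> Prop :=
  if n is n'.+1 then mulI (powI I n') I else genI (fun g => g = 1).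

Definition colonI (A : S -> Prop) (m : S) : S -> Prop := fun f => A (f * m).

Definition mcolon (m m' : S) : S -> Prop := colonI (princ m) m'.

Definition subI (A B : S -> Prop) : Prop := forall f, A f -> B f.

Definition gen_by_variable (A : S -> Prop) : Prop :=
  exists v : 'I_d, forall f, A f <-> princ 'X_v f.

Definition simple_graph (E : {set {set 'I_d}}) : Prop :=
  forall e, e \in E -> #|e| = 2%N.

Definition edge_mon (e : {set 'I_d}) : S := \prod_(v in e) 'X_v.

Definition edge_ideal (E : {set {set 'I_d}}) : S -> Prop :=
  genI (fun g => exists2 e, e \in E & g = edge_mon e).

(* Ls is the list L_1 > L_2 > ... > L_k of all edges (a total order) *)
Definition edge_order (E : {set {set 'I_d}}) (Ls : seq {set 'I_d}) : Prop :=
  uniq Ls /\ forall e, (e \in Ls) = (e \in E).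

Definition is_expr (Ls : seq {set 'I_d}) (n : nat) (M : S) (a : seq nat) : Prop :=
  size a = size Ls /\ sumn a = n /\
  M = \prod_(i < size Ls) edge_mon (nth set0 Ls i) ^+ nth 0%N a i.

Definition lex_gt (a b : seq nat) : Prop :=
  exists i, (i < size a)%N /\ (forall l, (l < i)%N -> nth 0%N a l = nth 0%N b l)
            /\ (nth 0%N b i < nth 0%N a i)%N.

Definition is_maxexpr Ls n (M : S) (a : seq nat) : Prop :=
  is_expr Ls n M a /\ forall b, is_expr Ls n M b -> ~ lex_gt b a.

Definition gen_gt Ls n (M N : S) : Prop :=
  exists a b, is_maxexpr Ls n M a /\ is_maxexpr Ls n N b /\ lex_gt a b.

(* the minimal monomial generators of I^n (= all products of n edges,
   which all have degree 2n) *)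
Definition min_gen Ls n (M : S) : Prop := exists a, is_expr Ls n M a.

(* gens = [L^(n)_1; L^(n)_2; ...] : all minimal generators of I^n,
   without repetition, in decreasing order *)
Definition ordered_gens Ls n (gens : seq S) : Prop :=
  uniq gens /\ (forall M, M \in gens <-> min_gen Ls n M) /\
  (forall i j, (i < j)%N -> (j < size gens)%N -> gen_gt Ls n gens`_i gens`_j).

End EdgeIdeals.

(* Write the two generators as M = X^a and N = X^b for edge multisets a, b of
   size n, a >lex b.  If (M : N) is not contained in (I^(n+1) : N), then no
   multiset of more than n edges divides lcm(M, N).  Grow sub-multisets R of
   a - min(a, b) and F of b - min(a, b) greedily, starting from
   one edge of a at the first index where a and b differ, keeping the vertex
   degrees of R and F within total distance 2 and stopping only when neither
   can be enlarged at a vertex where the other has excess.  If R and F had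
   different sizes, b - F + R or a - R + F would be a multiset of more than n
   edges dividing lcm(M, N); so they have the same size, and c := b - F + R is
   an expression lexicographically above b either of N itself (contradicting
   maximality) or of N x_w / x_z with x_w dividing M / gcd(M, N).  The latter is
   a generator preceding N whose colon ideal with N is (x_w). *)

From mathcomp Require Import all_boot all_algebra.
From mathcomp Require Import mpoly.
From mathcomp Require Import zify.
Set Implicit Arguments. Unset Strict Implicit. Unset Printing Implicit Defensive.

(* A multiset of the edges [es 0], ..., [es (k-1)] is a multiplicity function
   [nat -> nat]; its values at [i >= k] are irrelevant. *)
Section EdgeMultisets.
Variables (d k : nat) (es : nat -> {set 'I_d}).
Hypothesis card_es : forall i, i < k -> #|es i| = 2.

Definition nedges (s : nat -> nat) := \sum_(i < k) s i.
Definition vdeg (s : nat -> nat) (v : 'I_d) := \sum_(i < k) s i * (v \in es i).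
Definition submult (s t : nat -> nat) := forall i, i < k -> s i <= t i.
Definition edge1 (l : nat) : nat -> nat := fun i => i == l.

Lemma vdeg_le s t v : submult s t -> vdeg s v <= vdeg t v.
Proof. by move=> st; apply: leq_sum => i _; rewrite leq_mul2r st ?orbT. Qed.

Lemma nedges_le s t : submult s t -> nedges s <= nedges t.
Proof. by move=> st; apply: leq_sum => i _; apply: st. Qed.

Lemma vdeg_add s t v : vdeg (fun i => s i + t i) v = vdeg s v + vdeg t v.
Proof. by rewrite /vdeg -big_split; apply: eq_bigr => i _; rewrite mulnDl. Qed.

Lemma nedges_add s t : nedges (fun i => s i + t i) = nedges s + nedges t.
Proof. by rewrite /nedges -big_split. Qed.

Lemma vdeg_sub s t v : submult s t -> vdeg (fun i => t i - s i) v = vdeg t v - vdeg s v.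
Proof.
move=> st; rewrite /vdeg -sumnB => [|i _]; last by rewrite leq_mul2r st ?orbT.
by apply: eq_bigr => i _; rewrite mulnBl.
Qed.

Lemma nedges_sub s t : submult s t -> nedges (fun i => t i - s i) = nedges t - nedges s.
Proof. by move=> st; rewrite /nedges -sumnB // => i _; apply: st. Qed.

Lemma vdeg_eq_at s t v : (forall i, i < k -> v \in es i -> s i = t i) -> vdeg s v = vdeg t v.
Proof.
move=> st; apply: eq_bigr => i _.
by case: (boolP (v \in es i)) => vi; rewrite ?muln0 ?st.
Qed.

Lemma vdeg_edge1 l v : l < k -> vdeg (edge1 l) v = (v \in es l).
Proof.
move=> lk; rewrite /vdeg (bigD1 (Ordinal lk)) //= /edge1 eqxx mul1n big1 ?addn0 //.
by move=> i /negbTE; rewrite -val_eqE /= => ->.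
Qed.

Lemma nedges_edge1 l : l < k -> nedges (edge1 l) = 1.
Proof.
move=> lk; rewrite /nedges (bigD1 (Ordinal lk)) //= /edge1 eqxx big1 ?addn0 //.
by move=> i /negbTE; rewrite -val_eqE /= => ->.
Qed.

Lemma sum_vdeg s : \sum_(v < d) vdeg s v = 2 * nedges s.
Proof.
rewrite /vdeg exchange_big /nedges big_distrr /=; apply: eq_bigr => i _.
rewrite -big_distrr /= -(card_es (ltn_ord i)) mulnC; congr (_ * _).
by rewrite -sum1_card [RHS]big_mkcond; apply: eq_bigr => v _; case: (v \in es i).
Qed.

Lemma edge_other i v : i < k -> v \in es i -> exists2 u, u != v & es i = [set v; u].
Proof.
move=> ik; have /eqP/cards2P [x [y [xy ->]]] := card_es ik.
by rewrite !inE => /orP [] /eqP ->; [exists y; rewrite 1?eq_sym | exists x; rewrite 1?setUC].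
Qed.

Lemma submult_trans s t u : submult s t -> submult t u -> submult s u.
Proof. by move=> st tu i ik; apply: leq_trans (st i ik) (tu i ik). Qed.

Lemma submult_addr s t : submult s (fun i => s i + t i).
Proof. by move=> i _; apply: leq_addr. Qed.

Lemma submult_grow s t l : submult s t -> s l < t l -> submult (fun i => s i + edge1 l i) t.
Proof.
by move=> st lt i ik; rewrite /edge1; case: eqVneq => [->|_]; rewrite ?addn1 ?addn0 ?st.
Qed.

Lemma edge1_submult s l : 0 < s l -> submult (edge1 l) s.
Proof. by move=> sl i _; rewrite /edge1; case: eqVneq => [->|]. Qed.

Lemma remove_edge s : 0 < nedges s ->
  exists l s', [/\ l < k, nedges s = (nedges s').+1 &
    forall v, vdeg s v = vdeg s' v + (v \in es l)].
Proof.
move=> s_pos; have /existsP [[l lk] /= sl] : [exists i : 'I_k, 0 < s i].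
  apply: contraLR s_pos => /existsPn s0; rewrite -leqNgt leqn0 sum_nat_eq0.
  by apply/forallP => i; rewrite -leqn0 leqNgt s0.
have ls := edge1_submult sl.
exists l, (fun i => s i - edge1 l i); split => //.
  by rewrite nedges_sub // nedges_edge1 //; lia.
move=> v; rewrite vdeg_sub // vdeg_edge1 //.
by have := vdeg_le v ls; rewrite vdeg_edge1 //; lia.
Qed.

(* [x - y + (y - x)] is [|x - y|]: this is the l1-distance of degree vectors. *)
Definition degdist (R F : nat -> nat) :=
  \sum_(v < d) ((vdeg R v - vdeg F v) + (vdeg F v - vdeg R v)).

Lemma degdistC R F : degdist R F = degdist F R.
Proof. by apply: eq_bigr => v _; rewrite addnC. Qed.

Lemma degdist_edge1 l : l < k -> degdist (edge1 l) (fun=> 0) = 2.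
Proof.
move=> lk; rewrite /degdist -(card_es lk) -sum1_card [RHS]big_mkcond.
apply: eq_bigr => v _; rewrite vdeg_edge1 // /vdeg big1 => [|i _]; last exact: mul0n.
by rewrite subn0 sub0n addn0; case: (v \in es l).
Qed.

Lemma degdist_grow R F l v : l < k -> v \in es l -> vdeg F v < vdeg R v ->
  degdist R (fun i => F i + edge1 l i) <= degdist R F.
Proof.
move=> lk vl FR; have [u uv esl] := edge_other lk vl.
have one (x : 'I_d) : \sum_(t < d) ((t == x) : nat) = 1.
  by rewrite (bigD1 x) // eqxx big1 // => t /negbTE ->.
rewrite -(leq_add2r 1) -{1}(one v) -(one u) /degdist -!big_split /=.
apply: leq_sum => t _; rewrite vdeg_add vdeg_edge1 // esl !inE.
case: (eqVneq t v) => [->|tv]; first by rewrite [v == u]eq_sym (negbTE uv) /=; lia.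
by case: (eqVneq t u) => [->|tu] /=; lia.
Qed.

Definition saturated_at (B R F : nat -> nat) := forall v, vdeg F v < vdeg R v ->
  forall i, i < k -> v \in es i -> F i = B i.

Lemma saturated_or_growable B R F : submult F B -> saturated_at B R F \/
  exists l v, [/\ l < k, v \in es l, vdeg F v < vdeg R v & F l < B l].
Proof.
move=> FB; case: (boolP [exists v : 'I_d, exists l : 'I_k,
    [&& vdeg F v < vdeg R v, v \in es l & F l < B l]]).
  by case/existsP => v /existsP [l] /and3P [? ? ?]; right; exists l, v.
move/existsPn => sat; left => v FR i ik vi; apply/eqP; rewrite eqn_leq FB //=.
by rewrite leqNgt; move/existsPn: (sat v) => /(_ (Ordinal ik)); rewrite /= FR vi.
Qed.

Lemma saturate A B R F : submult R A -> submult F B -> degdist R F <= 2 ->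
  exists R' F', [/\ submult R R' /\ submult R' A, submult F F' /\ submult F' B,
    degdist R' F' <= 2, saturated_at B R' F' & saturated_at A F' R'].
Proof.
move Em : (nedges A - nedges R + (nedges B - nedges F)) => m.
elim/ltn_ind: m R F Em => m IH R F Em RA FB dRF.
case: (saturated_or_growable R FB) => [satF | [l [v [lk vl FR Fl]]]]; last first.
  have FB' := submult_grow FB Fl.
  have nF' := nedges_add F (edge1 l); rewrite nedges_edge1 // in nF'.
  have lt_m : nedges A - nedges R + (nedges B - nedges (fun i => F i + edge1 l i)) < m.
    by rewrite nF'; have := nedges_le FB'; rewrite nF'; lia.
  have [R' [F' [RR' [FF' F'B] dRF' sF sR]]] :=
    IH _ lt_m R _ erefl RA FB' (leq_trans (degdist_grow lk vl FR) dRF).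
  exists R', F'; split=> //; split=> //; exact: submult_trans (submult_addr _ _) FF'.
case: (saturated_or_growable F RA) => [satR | [l [v [lk vl RF Rl]]]].
  by exists R, F; split => //; split => // i.
have RA' := submult_grow RA Rl.
have nR' := nedges_add R (edge1 l); rewrite nedges_edge1 // in nR'.
have dRF' : degdist (fun i => R i + edge1 l i) F <= 2.
  by rewrite degdistC; apply: leq_trans (degdist_grow lk vl RF) _; rewrite degdistC.
have lt_m : nedges A - nedges (fun i => R i + edge1 l i) + (nedges B - nedges F) < m.
  by rewrite nR'; have := nedges_le RA'; rewrite nR'; lia.
have [R' [F' [[RR' R'A] FF' dRF'' sF sR]]] := IH _ lt_m _ F erefl RA' FB dRF'.
exists R', F'; split=> //; split=> //; exact: submult_trans (submult_addr _ _) RR'.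
Qed.

Lemma swap_vdeg_le_max A B R F : submult R A -> submult F B -> saturated_at B R F ->
  forall v, vdeg (fun i => B i - F i + R i) v <= maxn (vdeg A v) (vdeg B v).
Proof.
move=> RA FB sat v; rewrite vdeg_add vdeg_sub //.
have := vdeg_le v RA; have := vdeg_le v FB.
case: (ltnP (vdeg F v) (vdeg R v)) => [FR|]; last lia.
by rewrite (vdeg_eq_at (sat v FR)); lia.
Qed.

Lemma degdist_balanced R F : nedges R = nedges F -> degdist R F <= 2 ->
  (forall v, vdeg R v = vdeg F v) \/
  exists w z, w != z /\ forall t, vdeg R t + (z == t) = vdeg F t + (w == t).
Proof.
move=> RF dRF.
have excess : \sum_(v < d) (vdeg R v - vdeg F v) = \sum_(v < d) (vdeg F v - vdeg R v).
  apply/(@addIn (2 * nedges R)); rewrite {1}RF -!sum_vdeg -!big_split /=.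
  by apply: eq_bigr => v _; lia.
move: dRF; rewrite /degdist big_split /= excess.
set p := \sum_(v < d) (vdeg F v - vdeg R v) in excess * => dRF.
have [p0|p1] : p = 0 \/ p = 1 by lia.
  left => v; have /eqP := p0; rewrite sum_nat_eq0 => /forallP /(_ v) /eqP FR.
  by have /eqP := excess; rewrite p0 sum_nat_eq0 => /forallP /(_ v) /eqP; lia.
right; have /eqP/sum_nat_eq1 [w [_ Rw Rt]] := etrans excess p1.
have /eqP/sum_nat_eq1 [z [_ Fz Ft]] := p1.
exists w, z; split; first by apply/eqP => wz; move: Rw Fz; rewrite wz; lia.
move=> t; have := Rt t; have := Ft t; rewrite ![t == _]eq_sym.
by case: (eqVneq z t) => [?|_]; case: (eqVneq w t) => [?|_]; subst => /=; lia.
Qed.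

Lemma exchange_balanced A B l : l < k -> 0 < A l -> nedges A = nedges B ->
  (forall C, (forall v, vdeg C v <= maxn (vdeg A v) (vdeg B v)) -> nedges C <= nedges B) ->
  exists R F, [/\ submult R A, submult F B, 0 < R l, nedges R = nedges F &
    (forall v, vdeg R v = vdeg F v) \/
    exists w z, [/\ w != z, forall t, vdeg R t + (z == t) = vdeg F t + (w == t) &
                    vdeg B w < vdeg A w]].
Proof.
move=> lk Al AB maxB.
have maxA C : (forall v, vdeg C v <= maxn (vdeg B v) (vdeg A v)) -> nedges C <= nedges A.
  by move=> HC; rewrite AB; apply: maxB => v; rewrite maxnC.
have [R [F [[lR RA] [_ FB] dRF satF satR]]] :=
  saturate (edge1_submult Al) (fun i _ => leq0n (B i)) (eq_leq (degdist_edge1 lk)).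
have := maxB _ (swap_vdeg_le_max RA FB satF); have := maxA _ (swap_vdeg_le_max FB RA satR).
have := nedges_le RA; have := nedges_le FB.
rewrite !nedges_add !nedges_sub // => nFB nRA gainA gainB.
(* Otherwise [B - F + R] or [A - R + F] has more edges than [B] and still fits. *)
have RF : nedges R = nedges F by lia.
have Rl : 0 < R l by have := lR l lk; rewrite /edge1 eqxx.
case: (degdist_balanced RF dRF) => [eqRF|[w [z [wz shift]]]].
  by exists R, F; split => //; left.
exists R, F; split => //; right; exists w, z; split => //.
have FRw : vdeg F w < vdeg R w.
  by have := shift w; rewrite [z == w]eq_sym (negbTE wz) eqxx; lia.
by rewrite -(vdeg_eq_at (satF w FRw)); have := vdeg_le w RA; lia.
Qed.

Lemma lex_exchange a b l : l < k -> (forall i, i < l -> a i = b i) -> b l < a l ->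
  nedges a = nedges b ->
  (forall C, (forall v, vdeg C v <= maxn (vdeg a v) (vdeg b v)) -> nedges C <= nedges b) ->
  exists c, [/\ nedges c = nedges b, forall i, i < l -> c i = b i, b l < c l &
    (forall v, vdeg c v = vdeg b v) \/
    exists w z, [/\ w != z, forall t, vdeg c t + (z == t) = vdeg b t + (w == t) &
                    vdeg b w < vdeg a w]].
Proof.
move=> lk ab_pre ba_l ab maxb.
(* Discarding the common part [m] forces [F] to vanish up to [l]. *)
pose m i := minn (a i) (b i); pose A i := a i - m i; pose B i := b i - m i.
have ma : submult m a by move=> i _; apply: geq_minl.
have mb : submult m b by move=> i _; apply: geq_minr.
have dA v : vdeg A v = vdeg a v - vdeg m v by apply: vdeg_sub.
have dB v : vdeg B v = vdeg b v - vdeg m v by apply: vdeg_sub.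
have nA : nedges A = nedges a - nedges m by apply: nedges_sub.
have nB : nedges B = nedges b - nedges m by apply: nedges_sub.
have := nedges_le ma; have := nedges_le mb => nmb nma.
have maxB C : (forall v, vdeg C v <= maxn (vdeg A v) (vdeg B v)) -> nedges C <= nedges B.
  move=> HC; suff: nedges m + nedges C <= nedges b by lia.
  rewrite -nedges_add; apply: maxb => v; rewrite vdeg_add.
  have := HC v; rewrite dA dB; have := vdeg_le v ma; have := vdeg_le v mb; lia.
have Al : 0 < A l by rewrite /A /m; lia.
have [|R [F [RA FB Rl RF Hcase]]] := exchange_balanced lk Al _ maxB; first lia.
have Fb : submult F b := submult_trans FB (fun i _ => leq_subr _ _).
have R0 i : i < l -> R i = 0.
  move=> il; have := RA i (ltn_trans il lk); rewrite /A /m ab_pre //; lia.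
have F0 i : i <= l -> F i = 0.
  move=> il; have : b i <= a i.
    by case: (ltngtP i l) il => // [/ab_pre -> | -> _] //; apply: ltnW.
  have := FB i (leq_ltn_trans il lk); rewrite /B /m; lia.
have dc v : vdeg (fun i => b i - F i + R i) v = vdeg b v - vdeg F v + vdeg R v.
  by rewrite vdeg_add vdeg_sub.
exists (fun i => b i - F i + R i); split.
- by rewrite nedges_add nedges_sub //; have := nedges_le Fb; lia.
- by move=> i il; rewrite R0 // F0 ?subn0 ?addn0 // ltnW.
- by rewrite F0 // subn0; lia.
case: Hcase => [eqRF|[w [z [wz shift Bw]]]]; [left => v|right; exists w, z; split => //].
- by rewrite dc eqRF; have := vdeg_le v Fb; lia.
- by move=> t; rewrite dc; have := shift t; have := vdeg_le t Fb; lia.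
by move: Bw; rewrite dA dB; lia.
Qed.

End EdgeMultisets.

Lemma lex_gt_cons (x y : nat) xs ys :
  lex_gt (x :: xs) (y :: ys) <-> y < x \/ x = y /\ lex_gt xs ys.
Proof.
split=> [[[|i] [ix [pre lt]]]|[lt|[-> [i [ix [pre lt]]]]]]; first by left.
- right; split; first exact: (pre 0).
  by exists i; split=> //; split=> // l li; apply: (pre l.+1).
- by exists 0.
by exists i.+1; split=> //; split=> // [[|l]] li //=; apply: pre.
Qed.

Lemma lex_gt_total (xs ys : seq nat) : size xs = size ys ->
  [\/ xs = ys, lex_gt xs ys | lex_gt ys xs].
Proof.
elim: xs ys => [|x xs IH] [|y ys] //; first by constructor 1.
move=> [/IH rec].
case: (ltngtP x y) => [xy|yx|<-].
- by constructor 3; apply/lex_gt_cons; left.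
- by constructor 2; apply/lex_gt_cons; left.
case: rec => [->|xy|yx]; first by constructor 1.
- by constructor 2; apply/lex_gt_cons; right.
by constructor 3; apply/lex_gt_cons; right.
Qed.

Lemma lex_gt_trans (xs ys zs : seq nat) : lex_gt xs ys -> lex_gt ys zs -> lex_gt xs zs.
Proof.
move=> [i [ix [pi yxi]]] [j [jy [pj zyj]]].
case: (ltngtP i j) => [ij|ji|ij]; last subst j.
- exists i; split=> //; split=> [l li|]; last by rewrite -pj.
  by rewrite pi // pj // (ltn_trans li ij).
- exists j; split; first exact: ltn_trans ji ix.
  split=> [l lj|]; last by rewrite pi.
  by rewrite pi ?pj // (ltn_trans lj ji).
exists i; split=> //; split=> [l li|]; [by rewrite pi ?pj | exact: ltn_trans zyj yxi].
Qed.

Lemma is_maxexpr_uniq (K : fieldType) d Ls n (M : {mpoly K[d]}) a b :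
  is_maxexpr Ls n M a -> is_maxexpr Ls n M b -> a = b.
Proof.
move=> [[Sa EaM] Ma] [[Sb EbM] Mb].
case: (lex_gt_total (etrans Sa (esym Sb))) => // [ab|ba].
  by case: (Mb a (conj Sa EaM) ab).
by case: (Ma b (conj Sb EbM) ba).
Qed.

Lemma lex_gt_mkseq (c : nat -> nat) (b : seq nat) k l : l < k ->
  (forall i, i < l -> c i = nth 0 b i) -> nth 0 b l < c l -> lex_gt (mkseq c k) b.
Proof.
move=> lk c_pre bc; exists l; rewrite size_mkseq nth_mkseq //; split=> //; split=> // i il.
by rewrite nth_mkseq ?c_pre // (ltn_trans il lk).
Qed.

Import GRing.Theory.
Local Open Scope ring_scope.

Section MonomialIdeals.
Variables (K : fieldType) (d : nat).
Local Notation S := {mpoly K[d]}.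

Lemma genI_pairs (P : S -> Prop) f : genI P f <->
  exists zs : seq (S * S), (forall z, z \in zs -> P z.2) /\ f = \sum_(z <- zs) z.1 * z.2.
Proof.
split.
- move=> [gs [cs [Hs [HP ->]]]]; exists (zip cs gs); split.
    move=> z zin; have zi : (index z (zip cs gs) < size (zip cs gs))%N by rewrite index_mem.
    rewrite -(nth_index (0, 0) zin) nth_zip //=; apply/HP/mem_nth.
    by move: zi; rewrite size_zip Hs minnn.
  rewrite (big_nth (0, 0)) big_mkord size_zip Hs minnn; apply: eq_bigr => i _.
  by rewrite nth_zip.
- move=> [zs [HP ->]]; exists (map snd zs), (map fst zs); split; first by rewrite !size_map.
  split; first by move=> g /mapP [z zin ->]; apply: HP.
  rewrite [LHS](big_nth (0, 0)) big_mkord size_map; apply: eq_bigr => i _.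
  by rewrite !(nth_map (0, 0)).
Qed.

Lemma genI_gen (P : S -> Prop) g : P g -> genI P g.
Proof.
move=> Pg; apply/genI_pairs; exists [:: (1, g)]; split; first by move=> z; rewrite inE => /eqP ->.
by rewrite big_seq1 mul1r.
Qed.

Lemma genI_mul (P : S -> Prop) c f : genI P f -> genI P (c * f).
Proof.
move=> /genI_pairs [zs [HP ->]]; apply/genI_pairs.
exists (map (fun z => (c * z.1, z.2)) zs); split; first by move=> z /mapP [y yin ->] /=; apply: HP.
by rewrite big_map mulr_sumr; apply: eq_bigr => z _; rewrite mulrA.
Qed.

Lemma genI_sum (P : S -> Prop) (T : Type) (r : seq T) (F : T -> S) :
  (forall x, genI P (F x)) -> genI P (\sum_(x <- r) F x).
Proof.
move=> PF; elim: r => [|x r IH].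
  by rewrite big_nil; apply/genI_pairs; exists [::]; split=> //; rewrite big_nil.
rewrite big_cons; move: (PF x) IH => /genI_pairs [z1 [P1 ->]] /genI_pairs [z2 [P2 ->]].
apply/genI_pairs; exists (z1 ++ z2); rewrite big_cat; split => // z.
by rewrite mem_cat => /orP [] zin; [apply: P1 | apply: P2].
Qed.

Lemma princ_genI (P : S -> Prop) g f : genI P g -> princ g f -> genI P f.
Proof.
move=> Pg [gs [cs [_ [gsg ->]]]]; apply: genI_sum => i.
by rewrite (gsg gs`_i) ?mem_nth //; apply: genI_mul.
Qed.

Lemma princXP (m : 'X_{1..d}) (p : S) :
  princ 'X_[m] p <-> forall u, u \in msupp p -> (m <= u)%MM.
Proof.
split=> [Pp u|mp].
  have [c ->] : exists c, p = c * 'X_[m].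
    case: Pp => gs [cs [_ [gsm ->]]]; exists (\sum_(i < size gs) cs`_i).
    by rewrite mulr_suml; apply: eq_bigr => i _; rewrite (gsm gs`_i) ?mem_nth.
  by rewrite (perm_mem (msuppMX c m)) => /mapP [u' _ ->]; apply: lem_addr.
rewrite [p]mpolyE big_seq (eq_bigr (fun u => (p@_u *: 'X_[(u - m)%MM]) * 'X_[m])).
  by rewrite -big_seq; apply: genI_sum => u; apply/genI_mul/genI_gen.
by move=> u /mp um; rewrite -scalerAl -mpolyXD submK.
Qed.

Lemma mcolonXP (m n : 'X_{1..d}) (f : S) :
  mcolon ('X_[m] : S) 'X_[n] f <-> forall u, u \in msupp f -> (m <= n + u)%MM.
Proof.
split=> [/princXP mf u uf | mf]; last apply/princXP => u.
  by apply: mf; rewrite (perm_mem (msuppMX f n)); apply: map_f.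
by rewrite (perm_mem (msuppMX f n)) => /mapP [u' /mf u'f ->].
Qed.

Lemma mcolonX_sub_colon (P : S -> Prop) (m n c : 'X_{1..d}) : genI P 'X_[c] ->
  (forall v, c v <= maxn (m v) (n v))%N ->
  subI (mcolon ('X_[m] : S) 'X_[n]) (colonI (genI P) 'X_[n]).
Proof.
move=> Pc cmn f /mcolonXP mf; apply: (princ_genI Pc); apply/princXP => u.
rewrite (perm_mem (msuppMX f n)) => /mapP [u' /mf /mnm_lepP mu' ->].
by apply/mnm_lepP => v; have := mu' v; have := cmn v; rewrite !mnmDE; lia.
Qed.

Lemma mcolonX_sub_var (m n : 'X_{1..d}) (w : 'I_d) : (n w < m w)%N ->
  subI (mcolon ('X_[m] : S) 'X_[n]) (princ 'X_w).
Proof.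
move=> nm f /mcolonXP mf; apply/princXP => u uf; rewrite lep1mP.
by have /mnm_lepP/(_ w) := mf u uf; rewrite mnmDE; lia.
Qed.

Lemma mcolonX_var (m n : 'X_{1..d}) (w z : 'I_d) : w != z -> (m + U_(z) = n + U_(w))%MM ->
  forall f : S, mcolon ('X_[m] : S) 'X_[n] f <-> princ 'X_w f.
Proof.
move=> wz mzw f; have mt (t : 'I_d) := congr1 (fun m : 'X_{1..d} => m t) mzw.
split=> [mf|]; first apply: mcolonX_sub_var mf.
  by have := mt w; rewrite !mnmDE !mnm1E eqxx [z == w]eq_sym (negbTE wz); lia.
move=> /princXP wf; apply/mcolonXP => u /wf; rewrite lep1mP => uw.
apply/mnm_lepP => t; have := mt t; rewrite !mnmDE !mnm1E.
by case: (eqVneq w t) => [?|_]; subst => //=; lia.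
Qed.

Lemma mcolonX_var_cover (m n c : 'X_{1..d}) (w z : 'I_d) : w != z ->
  (c + U_(z) = n + U_(w))%MM -> (n w < m w)%N ->
  gen_by_variable (mcolon ('X_[c] : S) 'X_[n]) /\
  subI (mcolon ('X_[m] : S) 'X_[n]) (mcolon 'X_[c] 'X_[n]).
Proof.
move=> wz czw nm; have var := mcolonX_var wz czw.
by split; [exists w | move=> f /(mcolonX_sub_var nm) /var].
Qed.

End MonomialIdeals.

Lemma ordered_gens_earlier (K : fieldType) d Ls n (gens : seq {mpoly K[d]}) k' b N c :
  ordered_gens Ls n gens -> (k' < size gens)%N -> is_maxexpr Ls n gens`_k' b ->
  is_expr Ls n N c -> lex_gt c b -> exists2 i, (i < k')%N & gens`_i = N.
Proof.
move=> [_ [genP gens_gt]] k'_lt Mb Ec cb.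
have Nin : N \in gens by apply/genP; exists c.
exists (index N gens); last exact: nth_index.
case: (ltngtP (index N gens) k') => // [k'_i|i_k']; exfalso.
  have [b' [a' [Mb' [[Ea' Ma'] b'a']]]] := gens_gt _ _ k'_i (etrans (index_mem N gens) Nin).
  rewrite nth_index // in Ea' Ma'.
  by apply: (Ma' c Ec); apply: lex_gt_trans cb _; rewrite (is_maxexpr_uniq Mb Mb').
by apply: (Mb.2 c _ cb); rewrite -i_k' nth_index.
Qed.

Section EdgeIdealPowers.
Variables (K : fieldType) (d : nat) (Ls : seq {set 'I_d}).
Local Notation S := {mpoly K[d]}.
Local Notation k := (size Ls).
Local Notation es := (nth set0 Ls).

Definition edges_mnm (s : nat -> nat) : 'X_{1..d} := [multinom vdeg k es s v | v < d].

Lemma edge_monE l : (l < k)%N -> edge_mon K (es l) = 'X_[edges_mnm (edge1 l)].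
Proof.
move=> lk; rewrite /edge_mon mprodXE; congr mpolyX; apply/mnmP => v.
rewrite mnm_sumE mnmE vdeg_edge1 // (eq_bigr (fun t => (t == v) : nat)) => [|t _]; last first.
  by rewrite mnm1E.
case: (boolP (v \in es l)) => vl; last first.
  by rewrite big1 // => t tl; case: eqVneq tl vl => // -> ->.
by rewrite (bigD1 v) //= eqxx big1 // => t /andP [_ /negbTE ->].
Qed.

Lemma prod_edge_monE (a : nat -> nat) :
  \prod_(i < k) edge_mon K (es i) ^+ a i = 'X_[edges_mnm a] :> S.
Proof.
rewrite (eq_bigr (fun i : 'I_k => 'X_[edges_mnm (edge1 i)] ^+ a i)) => [|i _]; last first.
  by rewrite edge_monE.
rewrite mprodXnE; congr mpolyX; apply/mnmP => v; rewrite mnm_sumE mnmE.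
by apply: eq_bigr => i _; rewrite mulmnE mnmE vdeg_edge1 // mulnC.
Qed.

Lemma is_exprE n (M : S) a : is_expr Ls n M a ->
  M = 'X_[edges_mnm (nth 0%N a)] /\ nedges k (nth 0%N a) = n.
Proof.
move=> [Sa [Na ->]]; rewrite prod_edge_monE; split=> //.
by rewrite -Na sumnE (big_nth 0%N) big_mkord Sa.
Qed.

Lemma is_expr_mkseq (c : nat -> nat) :
  is_expr Ls (nedges k c) ('X_[edges_mnm c] : S) (mkseq c k).
Proof.
split; first by rewrite size_mkseq.
split.
  rewrite sumnE (big_nth 0%N) big_mkord size_mkseq.
  by apply: eq_bigr => i _; rewrite nth_mkseq.
rewrite prod_edge_monE; congr mpolyX; apply/mnmP => v; rewrite !mnmE.
by apply: eq_bigr => i _; rewrite nth_mkseq.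
Qed.

Lemma edges_mnm_pow (E : {set {set 'I_d}}) : (forall i, (i < k)%N -> es i \in E) ->
  forall n s, (n <= nedges k s)%N -> powI (edge_ideal E) n ('X_[edges_mnm s] : S).
Proof.
move=> es_in_E; elim=> [|n IH] s ns /=.
  by rewrite -[X in genI _ X]mulr1; apply/genI_mul/genI_gen.
have [l [s' [lk ss' ds']]] := remove_edge es (leq_ltn_trans (leq0n n) ns).
have -> : edges_mnm s = (edges_mnm s' + edges_mnm (edge1 l))%MM.
  by apply/mnmP => v; rewrite mnmDE !mnmE ds' vdeg_edge1.
rewrite mpolyXD; apply: genI_gen.
exists 'X_[edges_mnm s'], (edge_mon K (es l)); split; first by apply: IH; lia.
by split; [apply: genI_gen; exists (es l); rewrite ?es_in_E | rewrite edge_monE].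
Qed.

Lemma edges_under_lcm_le (E : {set {set 'I_d}}) n a b :
  (forall i, (i < k)%N -> es i \in E) ->
  ~ subI (mcolon ('X_[edges_mnm a] : S) 'X_[edges_mnm b])
         (colonI (powI (edge_ideal E) n.+1) 'X_[edges_mnm b]) ->
  forall C, (forall v, vdeg k es C v <= maxn (vdeg k es a v) (vdeg k es b v))%N ->
  (nedges k C <= n)%N.
Proof.
move=> es_in_E not_sub C HC; rewrite leqNgt; apply/negP => nC; apply: not_sub.
by apply: (mcolonX_sub_colon (edges_mnm_pow es_in_E nC)) => v; rewrite !mnmE.
Qed.

End EdgeIdealPowers.

Unset Implicit Arguments.

Theorem theorem4p12 (K : fieldType) (d : nat) (E : {set {set 'I_d}})
    (Ls : seq {set 'I_d}) (n : nat) (gens : seq {mpoly K[d]}) :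
  simple_graph E -> edge_order E Ls -> (1 <= n)%N -> ordered_gens Ls n gens ->
  forall k' j : nat, (1 <= k')%N -> (1 <= j <= k')%N -> (k'.+1 <= size gens)%N ->
    ~ subI (mcolon gens`_(j.-1) gens`_k')
           (colonI (powI (edge_ideal E) n.+1) gens`_k') ->
    exists i : nat, [/\ (1 <= i <= k')%N,
      gen_by_variable (mcolon gens`_(i.-1) gens`_k') &
      subI (mcolon gens`_(j.-1) gens`_k') (mcolon gens`_(i.-1) gens`_k')].
Proof.
move=> simpleE [_ LsE] _ gensP k' j _ /andP [j_gt0 j_le] k'_lt not_in_pow.
have es_in_E i : (i < size Ls)%N -> nth set0 Ls i \in E by move=> ?; rewrite -LsE mem_nth.
have card_es i : (i < size Ls)%N -> #|nth set0 Ls i| = 2 by move/es_in_E/simpleE.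
have jk' : (j.-1 < k')%N by lia.
have [a [b [Ma [Mb [l [la [ab_pre ba_l]]]]]]] := gensP.2.2 _ _ jk' k'_lt.
have [Ea na] := is_exprE (proj1 Ma); have [Eb nb] := is_exprE (proj1 Mb).
have lk : (l < size Ls)%N by rewrite -(proj1 (proj1 Ma)).
rewrite Ea Eb in not_in_pow; have := edges_under_lcm_le es_in_E not_in_pow.
rewrite -nb => /(lex_exchange card_es lk ab_pre ba_l (etrans na (esym nb))).
move=> [c [nc c_pre bc_l shape]].
have Ec : is_expr Ls n ('X_[edges_mnm Ls c] : {mpoly K[d]}) (mkseq c (size Ls)).
  by rewrite -nb -nc; apply: is_expr_mkseq.
have [i ik' gi] := ordered_gens_earlier gensP k'_lt Mb Ec (lex_gt_mkseq lk c_pre bc_l).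
case: shape => [same | [w [z [wz shift bw]]]].
  have: gens`_i = gens`_k' by rewrite gi Eb; congr mpolyX; apply/mnmP => v; rewrite !mnmE same.
  by move/eqP; rewrite nth_uniq ?(ltn_trans ik') ?gensP.1 // => /eqP ik; move: ik'; rewrite ik ltnn.
have czw : (edges_mnm Ls c + U_(z) = edges_mnm Ls (nth 0%N b) + U_(w))%MM.
  by apply/mnmP => t; rewrite !mnmDE !mnm1E !mnmE shift.
have bw' : (edges_mnm Ls (nth 0%N b) w < edges_mnm Ls (nth 0%N a) w)%N by rewrite !mnmE.
have [var cover] := mcolonX_var_cover K wz czw bw'.
by exists i.+1; rewrite /= gi Ea Eb; split=> //; lia.
Qed.
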